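(* Assume the setting described in the context. Then $(L-1)\mathfrak m=0$ if and only if for all $\theta,\vartheta\in\mathbb R^{\mathfrak d}$ and $\lambda\in[0,1]$ it holds that $\mathcal L_\infty(\lambda\theta+(1-\lambda)\vartheta)\le\lambda\mathcal L_\infty(\theta)+(1-\lambda)\mathcal L_\infty(\vartheta)$.
   Context: Setting. Let $L,\mathfrak d\in\mathbb N=\{1,2,\dots\}$, $(\ell_k)_{k\in\mathbb N_0}\subseteq\mathbb N$, $a\in\mathbb R$, $b\in(a,\infty)$ with $\mathfrak d=\sum_{k=1}^L\ell_k(\ell_{k-1}+1)$; let $\mathbf d_k=\sum_{h=1}^k\ell_h(\ell_{h-1}+1)$ for $k\in\mathbb N_0$. For $\theta=(\theta_1,\dots,\theta_{\mathfrak d})\in\mathbb R^{\mathfrak d}$, $k\in\{1,\dots,L\}$, $i\in\{1,\dots,\ell_k\}$, $j\in\{1,\dots,\ell_{k-1}\}$ let $\mathfrak w^{k,\theta}_{i,j}=\theta_{(i-1)\ell_{k-1}+j+\mathbf d_{k-1}}$ and $\mathfrak b^{k,\theta}_i=\theta_{\ell_k\ell_{k-1}+i+\mathbf d_{k-1}}$, let $\mathfrak w^{k,\theta}=(\mathfrak w^{k,\theta}_{i,j})_{i,j}\in\mathbb R^{\ell_k\times\ell_{k-1}}$, $\mathfrak b^{k,\theta}=(\mathfrak b^{k,\theta}_1,\dots,\mathfrak b^{k,\theta}_{\ell_k})\in\mathbb R^{\ell_k}$, and $\mathcal A^\theta_k(x)=\mathfrak b^{k,\theta}+\mathfrak w^{k,\theta}x$.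 Let $\mathfrak M_\infty(x_1,\dots,x_n)=(\max\{x_1,0\},\dots,\max\{x_n,0\})$ and $\|\cdot\|$ the Euclidean norm. Define $\mathcal N^{k,\theta}_\infty\colon\mathbb R^{\ell_0}\to\mathbb R^{\ell_k}$, $k\in\{1,\dots,L\}$, by $\mathcal N^{1,\theta}_\infty=\mathcal A^\theta_1$ and $\mathcal N^{k+1,\theta}_\infty(x)=\mathcal A^\theta_{k+1}(\mathfrak M_\infty(\mathcal N^{k,\theta}_\infty(x)))$. Let $\mu$ be a measure on the Borel $\sigma$-algebra of $[a,b]^{\ell_0}$ with $\mathfrak m=\mu([a,b]^{\ell_0})\in\mathbb R$, let $f\colon[a,b]^{\ell_0}\to\mathbb R^{\ell_L}$ be measurable, and let $\mathcal L_\infty\colon\mathbb R^{\mathfrak d}\to\mathbb R$, $\mathcal L_\infty(\theta)=\int_{[a,b]^{\ell_0}}\|\mathcal N^{L,\theta}_\infty(x)-f(x)\|^2\,\mu(dx)$ (these integrals are real numbers as part of the setting). *)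

From HB Require Import structures.
From mathcomp Require Import all_boot all_order all_algebra.
From mathcomp Require Import all_classical all_reals all_analysis.
Set Implicit Arguments. Unset Strict Implicit. Unset Printing Implicit Defensive.
Import Order.TTheory GRing.Theory Num.Theory.
Local Open Scope ring_scope.

(* Fully connected ReLU networks with architecture (l 0, l 1, ..., l L),
   parameter vector theta : 'rV[R]_dd.  All indices below are 0-based:
   the paper's 1-based theta_{n} is (param theta (n-1)). *)

Section Net.
Variable R : realType.
Variable l : nat -> nat.

Definition dk (k : nat) : nat := (\sum_(1 <= h < k.+1) l h * (l h.-1 + 1))%N.

Variable dd : nat.

(* the n-th (0-based) coordinate of theta (0 outside the range, never used) *)
Definition param (theta : 'rV[R]_dd) (n : nat) : R :=
  odflt 0 (omap (fun i : 'I_dd => theta 0 i) (insub n)).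

(* w^{k,theta}_{i+1,j+1} = theta_{i l_{k-1} + (j+1) + d_{k-1}} (1-based) *)
Definition weight (theta : 'rV[R]_dd) (k i j : nat) : R :=
  param theta (i * l k.-1 + j + dk k.-1)%N.

(* b^{k,theta}_{i+1} = theta_{l_k l_{k-1} + (i+1) + d_{k-1}} (1-based) *)
Definition bias (theta : 'rV[R]_dd) (k i : nat) : R :=
  param theta (l k * l k.-1 + i + dk k.-1)%N.

(* A^theta_k (y) = b^{k,theta} + w^{k,theta} y ; vectors are represented as
   nat -> R, only the first l_k (resp. l_{k-1}) entries are meaningful. *)
Definition affine (theta : 'rV[R]_dd) (k : nat) (y : nat -> R) : nat -> R :=
  fun i => bias theta k i + \sum_(j < l k.-1) weight theta k i j * y j.

Definition relu (y : nat -> R) : nat -> R := fun i => Num.max (y i) 0.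

Fixpoint realization (theta : 'rV[R]_dd) (k : nat) (x : nat -> R) : nat -> R :=
  match k with
  | 0 => fun _ => 0 (* unused *)
  | k'.+1 => if k' is 0 then affine theta 1 x
             else affine theta k'.+1 (relu (realization theta k' x))
  end.

End Net.

Definition box (R : realType) (n : nat) (a b : R) : set (n.-tuple R) :=
  [set x | forall i : 'I_n, a <= tnth x i <= b].

Arguments box {R} n a b.

Definition risk (R : realType) (l : nat -> nat) (L dd : nat) (a b : R)
  (mu : {measure set ((l 0%N).-tuple R) -> \bar R})
  (f : (l 0%N).-tuple R -> (l L).-tuple R) (theta : 'rV[R]_dd) : \bar R :=
  \int[mu]_(x in box (l 0%N) a b)
     ((\sum_(i < l L)
        (realization l theta L (fun j => nth 0%R (x : seq R) j) i
         - tnth (f x) i) ^+ 2)%R)%:E.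

(* For depth one the realization is linear in the parameters, so the pointwise
   squared error and hence the risk are convex; a null box measure makes the
   risk vanish identically.  For depth L >= 2, the parameters that route a
   single path through the first neuron of every layer (bias q in layer 1,
   unit weights in the hidden layers, weight w in layer L, zeros elsewhere)
   realize the constant output w * max(q, 0) e_1, and this family is closed
   under convex combinations.  The endpoints (w, q) = (2u, 0) and (0, 2) both
   realize 0 while their midpoint realizes u, so convexity bounds the risk
   rho(u) of the constant output u e_1 by rho(0).  Adding the bounds for u = 1
   and u = -1 and using rho(1) + rho(-1) = 2 rho(0) + 2 mu([a, b]^l0) forces
   mu([a, b]^l0) = 0. *)

From HB Require Import structures.
From mathcomp Require Import all_boot all_order all_algebra.
From mathcomp Require Import all_classical all_reals all_analysis.
From mathcomp Require Import measurable_realfun zify ring lra.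
Import Order.TTheory GRing.Theory Num.Theory.
Local Open Scope ring_scope.

Section ParameterLayout.
Context {l : nat -> nat}.
Hypothesis l_gt0 : forall k, (0 < l k)%N.

Lemma dk0 : dk l 0 = 0%N.
Proof. by rewrite /dk big_geq. Qed.

Lemma dkS k : dk l k.+1 = (dk l k + l k.+1 * (l k + 1))%N.
Proof. by rewrite /dk big_nat_recr. Qed.

Lemma ltn_dk : {mono dk l : m n / (m < n)%N}.
Proof.
apply/leqW_mono/leq_mono/(homo_ltn ltn_trans) => k.
by rewrite dkS -[X in (X < _)%N]addn0 ltn_add2l muln_gt0 l_gt0 addn1.
Qed.

Lemma leq_dk : {mono dk l : m n / (m <= n)%N}.
Proof. by apply: leq_mono => m n; rewrite ltn_dk. Qed.

Lemma dk_inj : injective (dk l).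
Proof. exact: incn_inj leq_dk. Qed.

Lemma eq_dk_block k m p : (dk l k <= p < dk l k.+1)%N -> p = dk l m -> m = k.
Proof.
by move=> + pm; rewrite pm leq_dk ltn_dk ltnS -eqn_leq => /eqP.
Qed.

End ParameterLayout.

Lemma param_row (R : realType) dd (g : nat -> R) n : (n < dd)%N ->
  param (\row_(i < dd) g i) n = g n.
Proof. by move=> ndd; rewrite /param insubT /= mxE. Qed.

Lemma param_comb (R : realType) dd (s t : R) (theta vartheta : 'rV[R]_dd) n :
  param (s *: theta + t *: vartheta) n = s * param theta n + t * param vartheta n.
Proof.
by rewrite /param; case: insubP => [i _ _|_] /=; rewrite ?mxE ?mulr0 ?addr0.
Qed.

Lemma realization1_comb (R : realType) (l : nat -> nat) dd (s t : R)
    (theta vartheta : 'rV[R]_dd) y i :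
  realization l (s *: theta + t *: vartheta) 1 y i =
  s * realization l theta 1 y i + t * realization l vartheta 1 y i.
Proof.
rewrite /= /affine /bias /weight !param_comb.
under eq_bigr do rewrite param_comb mulrDl -!mulrA.
by rewrite big_split /= -!mulr_sumr !mulrDr addrACA.
Qed.

Section ConstantNetwork.
Context {R : realType} {l : nat -> nat} {L : nat}.
Hypothesis l_gt0 : forall k, (0 < l k)%N.
Hypothesis L_ge2 : (2 <= L)%N.

Definition const_net_gain (w : R) (k : nat) : R :=
  if k.+1 == L then w else if k is 0 then 0 else 1.

(* Index [l 1 * l 0] holds the bias of neuron 0 of layer 1 and index [dk l k]
   the weight from neuron 0 to neuron 0 of layer k + 1. *)
Definition const_net_coord (w q : R) (n : nat) : R :=
  if n == (l 1 * l 0)%N then q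
  else if n == dk l L.-1 then w
  else if n \in map (dk l) (iota 1 (L - 2)) then 1 else 0.

Definition const_net (w q : R) : 'rV[R]_(dk l L) :=
  \row_(n < dk l L) const_net_coord w q n.

Lemma const_net_coord_block w q k p : (k < L)%N -> (dk l k <= p < dk l k.+1)%N ->
  const_net_coord w q p =
  if p == (l 1 * l 0)%N then q else if p == dk l k then const_net_gain w k else 0.
Proof.
move=> kL kp; rewrite /const_net_coord /const_net_gain; case: eqP => // _.
have [->|pk] := eqVneq p (dk l k).
  rewrite (inj_eq (dk_inj l_gt0)) (mem_map (dk_inj l_gt0)) mem_iota.
  have -> : (k == L.-1) = (k.+1 == L) by apply/eqP/eqP; lia.
  case: eqP => // /eqP kL1; case: k kL {kp} kL1 => //= k kL kL1.
  by rewrite ifT //; lia.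
have dkN m : (p == dk l m) = false.
  by apply/eqP => pm; rewrite pm (eq_dk_block l_gt0 _ _ _ kp pm) eqxx in pk.
by rewrite dkN; case: mapP => // -[m _ /eqP]; rewrite dkN.
Qed.

Lemma first_bias_lt_dk k : (0 < k)%N -> (l 1 * l 0 < dk l k)%N.
Proof.
move=> k_gt0; apply: leq_trans (_ : dk l 1 <= dk l k)%N; last by rewrite leq_dk.
by rewrite dkS dk0; have := l_gt0 1; nia.
Qed.

Lemma weight_const_net w q k i j : (k < L)%N -> (i < l k.+1)%N -> (j < l k)%N ->
  weight l (const_net w q) k.+1 i j =
  if (i == 0%N) && (j == 0%N) then const_net_gain w k else 0.
Proof.
move=> kL il jl; rewrite /weight /=.
have block : (dk l k <= i * l k + j + dk l k < dk l k.+1)%N by rewrite dkS; nia.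
have dkL : (dk l k.+1 <= dk l L)%N by rewrite leq_dk.
rewrite param_row; last by lia.
rewrite (const_net_coord_block _ _ _ _ kL block) ifF; last first.
  apply/eqP; case: k {kL block dkL} il jl => [|k] il jl; first by rewrite dk0; nia.
  by have := first_bias_lt_dk k.+1 isT; lia.
by have -> : (i * l k + j + dk l k == dk l k) = (i == 0%N) && (j == 0%N) by nia.
Qed.

Lemma bias_const_net w q k i : (k < L)%N -> (i < l k.+1)%N ->
  bias l (const_net w q) k.+1 i = if (k == 0%N) && (i == 0%N) then q else 0.
Proof.
move=> kL il; rewrite /bias /=.
have lkk_gt0 : (0 < l k.+1 * l k)%N by rewrite muln_gt0 !l_gt0.
have block : (dk l k <= l k.+1 * l k + i + dk l k < dk l k.+1)%N by rewrite dkS; nia.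
have dkL : (dk l k.+1 <= dk l L)%N by rewrite leq_dk.
rewrite param_row; last by lia.
rewrite (const_net_coord_block _ _ _ _ kL block).
have -> : (l k.+1 * l k + i + dk l k == dk l k) = false by apply/eqP; nia.
case: k {kL block dkL lkk_gt0} il => [|k] il.
  by rewrite dk0 addn0 -{2}[(l 1 * l 0)%N]addn0 eqn_add2l.
by rewrite ifF //; apply/eqP; have := first_bias_lt_dk k.+1 isT; lia.
Qed.

Lemma realization_const_net1 w q x i : (i < l 1)%N ->
  realization l (const_net w q) 1 x i = if i == 0%N then q else 0.
Proof.
move=> il; rewrite /= /affine bias_const_net //; last by lia.
rewrite big1 ?addr0 => [|j _]; first by case: (i == 0%N).
rewrite weight_const_net //; last by lia.
by rewrite /const_net_gain ifN_eq; [case: ifP; rewrite mul0r|lia].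
Qed.

Lemma realization_const_netS w q x k i : (0 < k < L)%N -> (i < l k.+1)%N ->
  realization l (const_net w q) k.+1 x i =
  if i == 0%N
  then const_net_gain w k * Num.max (realization l (const_net w q) k x 0) 0
  else 0.
Proof.
case: k => // k /andP[_ kL] il; rewrite [LHS]/= /affine bias_const_net // add0r.
rewrite (bigD1 (Ordinal (l_gt0 k.+1))) //= big1 ?addr0 => [|j j0].
  by rewrite weight_const_net // andbT /relu; case: (i == 0%N); rewrite ?mul0r.
by rewrite weight_const_net ?ltn_ord // (negbTE (j0 : j != 0%N :> nat)) andbF mul0r.
Qed.

Lemma const_net_hidden w q x k : (0 < k < L)%N ->
  Num.max (realization l (const_net w q) k x 0) 0 = Num.max q 0.
Proof.
elim: k => // -[_ _|k IH /andP[_ kL]]; first by rewrite realization_const_net1.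
rewrite realization_const_netS //; last by lia.
by rewrite /const_net_gain ifN_eq ?IH ?mul1r -?maxA ?maxxx //; lia.
Qed.

Lemma realization_const_net w q x i : (i < l L)%N ->
  realization l (const_net w q) L x i = if i == 0%N then w * Num.max q 0 else 0.
Proof.
move=> il; have L_gt0 : (0 < L)%N by lia.
rewrite -[X in realization _ _ X](prednK L_gt0) realization_const_netS ?prednK //.
  by rewrite const_net_hidden /const_net_gain ?prednK ?eqxx //; lia.
by lia.
Qed.

Lemma const_net_comb (lam w1 q1 w2 q2 : R) :
  lam *: const_net w1 q1 + (1 - lam) *: const_net w2 q2 =
  const_net (lam * w1 + (1 - lam) * w2) (lam * q1 + (1 - lam) * q2).
Proof.
apply/rowP => n; rewrite !mxE /const_net_coord.
by do 3 case: ifP => _ //; rewrite ?mulr1 ?mulr0 ?addr0 // addrC subrK.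
Qed.

End ConstantNetwork.

Arguments const_net {R} l L w q.

Section Measurability.
Local Open Scope classical_set_scope.
Context {R : realType}.

Lemma measurable_nth n j :
  measurable_fun setT (fun x : n.-tuple R => nth 0 (x : seq R) j).
Proof.
have [jn|nj] := ltnP j n.
  rewrite (_ : (fun x => _) = fun x : n.-tuple R => tnth x (Ordinal jn)).
    exact: measurable_tnth.
  by apply/funext => x; rewrite (tnth_nth 0).
rewrite (_ : (fun x => _) = fun _ : n.-tuple R => 0); first exact: measurable_cst.
by apply/funext => x; rewrite nth_default // size_tuple.
Qed.

Lemma measurable_box n (a b : R) : measurable (box n a b).
Proof.
rewrite (_ : box n a b = \bigcap_(j in [set j | (j < n)%N])
    ((fun x : n.-tuple R => nth 0 (x : seq R) j) @^-1` `[a, b])).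
  apply: bigcap_measurableType => j _; rewrite -[X in measurable X]setTI.
  exact: measurable_nth.
apply/seteqP; split => x /= xab => [j jn|i]; rewrite ?in_itv /=.
  by rewrite -[j]/(nat_of_ord (Ordinal jn)) -tnth_nth; exact: xab.
by rewrite (tnth_nth 0); have := xab i (ltn_ord i); rewrite /= in_itv.
Qed.

Lemma measurable_realization (l : nat -> nat) dd (theta : 'rV[R]_dd) k i :
  measurable_fun setT
    (fun x : (l 0%N).-tuple R => realization l theta k (fun j => nth 0 (x : seq R) j) i).
Proof.
elim: k i => [|[|k] IH] i /=; first exact: measurable_cst.
all: apply: measurable_funD => //; apply: measurable_sum => j.
all: apply: measurable_funM => //.
  exact: measurable_nth.
by apply: measurable_maxr => //; exact: IH.
Qed.

End Measurability.

Lemma sqr_convex_comb (R : realFieldType) (lam u v c : R) : 0 <= lam <= 1 ->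
  (lam * u + (1 - lam) * v - c) ^+ 2 <= lam * (u - c) ^+ 2 + (1 - lam) * (v - c) ^+ 2.
Proof.
move=> /andP[lam_ge0 lam_le1]; rewrite -subr_ge0.
have -> : lam * (u - c) ^+ 2 + (1 - lam) * (v - c) ^+ 2
           - (lam * u + (1 - lam) * v - c) ^+ 2 = lam * (1 - lam) * (u - v) ^+ 2.
  by ring.
by rewrite mulr_ge0 ?sqr_ge0 // mulr_ge0 // subr_ge0.
Qed.

Lemma ge0_integral_conic d (T : measurableType d) (R : realType)
    (mu : {measure set T -> \bar R}) (D : set T) (s t : R) (h1 h2 : T -> R) :
  measurable D -> 0 <= s -> 0 <= t ->
  measurable_fun D h1 -> measurable_fun D h2 ->
  (forall x, D x -> 0 <= h1 x) -> (forall x, D x -> 0 <= h2 x) ->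
  (\int[mu]_(x in D) (s * h1 x + t * h2 x)%:E =
   s%:E * \int[mu]_(x in D) (h1 x)%:E + t%:E * \int[mu]_(x in D) (h2 x)%:E)%E.
Proof.
move=> mD s_ge0 t_ge0 mh1 mh2 h1_ge0 h2_ge0.
have mEh1 : measurable_fun D (fun x => (h1 x)%:E) by exact/measurable_EFinP.
have mEh2 : measurable_fun D (fun x => (h2 x)%:E) by exact/measurable_EFinP.
have Eh1_ge0 x : D x -> (0 <= (h1 x)%:E)%E by rewrite lee_fin; exact: h1_ge0.
have Eh2_ge0 x : D x -> (0 <= (h2 x)%:E)%E by rewrite lee_fin; exact: h2_ge0.
under eq_integral do rewrite EFinD !EFinM.
rewrite ge0_integralD ?ge0_integralZl_EFin //.
- by move=> x Dx; apply: mule_ge0; [rewrite lee_fin|exact: Eh1_ge0].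
- exact: emeasurable_funM.
- by move=> x Dx; apply: mule_ge0; [rewrite lee_fin|exact: Eh2_ge0].
- exact: emeasurable_funM.
Qed.

Section Risk.
Context {R : realType} {l : nat -> nat} {L : nat} {a b : R}.
Context {mu : {measure set ((l 0%N).-tuple R) -> \bar R}}.
Context {f : (l 0%N).-tuple R -> (l L).-tuple R}.
Hypothesis mf : measurable_fun (box (l 0%N) a b) f.
Local Notation D := (box (l 0%N) a b).

Let mD : measurable D := measurable_box (l 0%N) a b.

Definition sq_loss (g : (l 0%N).-tuple R -> nat -> R) x : R :=
  \sum_(i < l L) (g x i - tnth (f x) i) ^+ 2.

Definition output_risk g : \bar R := \int[mu]_(x in D) (sq_loss g x)%:E.

Definition net_output {dd} (theta : 'rV[R]_dd) x : nat -> R :=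
  realization l theta L (fun j => nth 0 (x : seq R) j).

Lemma riskE dd (theta : 'rV[R]_dd) : risk a b mu f theta = output_risk (net_output theta).
Proof. by []. Qed.

Lemma sq_loss_ge0 g x : 0 <= sq_loss g x.
Proof. by apply: sumr_ge0 => i _; exact: sqr_ge0. Qed.

Lemma measurable_sq_loss {g} :
  (forall i, measurable_fun D (g ^~ i)) -> measurable_fun D (sq_loss g).
Proof.
move=> mg; apply: measurable_sum => i; apply: measurable_funX.
by apply: measurable_funB => //; exact: measurableT_comp (measurable_tnth i) mf.
Qed.

Lemma measurable_EFin_sq_loss {g} :
  (forall i, measurable_fun D (g ^~ i)) -> measurable_fun D (fun x => (sq_loss g x)%:E).
Proof. by move=> mg; apply/measurable_EFinP; exact: measurable_sq_loss. Qed.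

Lemma measurable_net_output dd (theta : 'rV[R]_dd) i :
  measurable_fun D (net_output theta ^~ i).
Proof. by apply: measurable_funTS; exact: measurable_realization. Qed.

Lemma output_risk_comb_le (lam : R) g g1 g2 : 0 <= lam <= 1 ->
  (forall i, measurable_fun D (g ^~ i)) ->
  (forall i, measurable_fun D (g1 ^~ i)) -> (forall i, measurable_fun D (g2 ^~ i)) ->
  (forall x i, g x i = lam * g1 x i + (1 - lam) * g2 x i) ->
  (output_risk g <= lam%:E * output_risk g1 + (1 - lam)%:E * output_risk g2)%E.
Proof.
move=> /andP[lam_ge0 lam_le1] mg mg1 mg2 gE.
rewrite /output_risk -ge0_integral_conic ?subr_ge0 //; last 4 first.
- exact: measurable_sq_loss.
- exact: measurable_sq_loss.
- by move=> x _; exact: sq_loss_ge0.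
- by move=> x _; exact: sq_loss_ge0.
apply: ge0_le_integral => //.
- by move=> x _; rewrite lee_fin sq_loss_ge0.
- exact: measurable_EFin_sq_loss mg.
- apply/measurable_EFinP; apply: measurable_funD;
    by apply: measurable_funM; [exact: measurable_cst|exact: measurable_sq_loss].
move=> x _; rewrite lee_fin /sq_loss !mulr_sumr -big_split /=.
by apply: ler_sum => i _; rewrite gE sqr_convex_comb ?lam_ge0.
Qed.

Lemma risk_null dd (theta : 'rV[R]_dd) : mu D = 0 -> risk a b mu f theta = 0.
Proof.
move=> muD0; apply: null_set_integral => //.
apply: (measurable_EFin_sq_loss (g := net_output theta)) => i.
exact: measurable_net_output.
Qed.

Lemma risk_convex_depth1 dd (theta vartheta : 'rV[R]_dd) (lam : R) :
  L = 1%N -> 0 <= lam <= 1 ->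
  (risk a b mu f (lam *: theta + (1 - lam) *: vartheta)
   <= lam%:E * risk a b mu f theta + (1 - lam)%:E * risk a b mu f vartheta)%E.
Proof.
move=> L1 lam01; rewrite !riskE.
apply: output_risk_comb_le => // [i|i|i|x i]; try exact: measurable_net_output.
by rewrite /net_output L1 realization1_comb.
Qed.

Definition const_output (u : R) (x : (l 0%N).-tuple R) (i : nat) : R :=
  if i == 0%N then u else 0.

Lemma output_risk_const_sym (u : R) : (0 < l L)%N ->
  (output_risk (const_output u) + output_risk (const_output (- u)) =
   2%:E * output_risk (const_output 0) + (2 * u ^+ 2)%:E * mu D)%E.
Proof.
move=> lL_gt0.
have mc v i : measurable_fun D (const_output v ^~ i) by exact: measurable_cst.
have mEc v : measurable_fun D (fun x => (sq_loss (const_output v) x)%:E).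
  exact: measurable_EFin_sq_loss (mc v).
have Ec_ge0 v x : D x -> (0 <= (sq_loss (const_output v) x)%:E)%E.
  by rewrite lee_fin sq_loss_ge0.
have sq_lossE x : sq_loss (const_output u) x + sq_loss (const_output (- u)) x =
                  2 * sq_loss (const_output 0) x + 2 * u ^+ 2 * 1.
  rewrite /sq_loss -big_split /= mulr_sumr mulr1.
  rewrite (eq_bigr (fun i : 'I_(l L) => 2 * (const_output 0 x i - tnth (f x) i) ^+ 2
                                        + 2 * const_output u x i ^+ 2)); last first.
    by move=> i _; rewrite /const_output; case: eqP => _; ring.
  rewrite big_split /= -!mulr_sumr; congr (_ + 2 * _).
  rewrite (bigD1 (Ordinal lL_gt0)) //= big1 ?addr0 // => i i0.
  by rewrite /const_output (negbTE (i0 : i != 0%N :> nat)) expr0n.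
rewrite /output_risk.
rewrite -(ge0_integralD _ mD (Ec_ge0 u) (mEc u) (Ec_ge0 (- u)) (mEc (- u))).
under eq_integral do rewrite -EFinD sq_lossE.
have u2_ge0 : 0 <= 2 * u ^+ 2 by rewrite mulr_ge0 ?sqr_ge0.
rewrite ge0_integral_conic ?integral_cst ?mul1e //.
- exact: measurable_sq_loss (mc 0).
- by move=> x _; exact: sq_loss_ge0.
Qed.

Section DeepNetwork.
Hypothesis l_gt0 : forall k, (0 < l k)%N.
Hypothesis L_ge2 : (2 <= L)%N.

Lemma risk_const_net (w q : R) :
  risk a b mu f (const_net l L w q) = output_risk (const_output (w * Num.max q 0)).
Proof.
rewrite riskE; apply: eq_integral => x _; congr EFin; apply: eq_bigr => i _.
by rewrite /net_output realization_const_net.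
Qed.

Hypothesis risk_convex : forall (theta vartheta : 'rV[R]_(dk l L)) (lam : R),
  0 <= lam <= 1 ->
  (risk a b mu f (lam *: theta + (1 - lam) *: vartheta)
   <= lam%:E * risk a b mu f theta + (1 - lam)%:E * risk a b mu f vartheta)%E.

Lemma output_risk_const_le (u : R) :
  (output_risk (const_output u) <= output_risk (const_output 0))%E.
Proof.
have half01 : 0 <= (2^-1 : R) <= 1 by apply/andP; split; lra.
have := risk_convex (const_net l L (2 * u) 0) (const_net l L 0 2) _ half01.
rewrite const_net_comb !risk_const_net maxxx !(mulr0, mul0r, addr0, add0r).
rewrite max_l; last by lra.
have -> : 2^-1 * (2 * u) * ((1 - 2^-1) * 2) = u :> R by field.
rewrite -ge0_muleDl ?lee_fin; [|lra|lra].
by rewrite -EFinD addrC subrK mul1e.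
Qed.

Hypothesis risk_fin : forall theta : 'rV[R]_(dk l L), (risk a b mu f theta < +oo)%E.

Lemma measure_box_eq0 : mu D = 0.
Proof.
have r_fin : output_risk (const_output 0) \is a fin_num.
  rewrite ge0_fin_numE; last by apply: integral_ge0 => x _; rewrite lee_fin sq_loss_ge0.
  by have := risk_fin (const_net l L 0 0); rewrite risk_const_net mul0r.
have := leeD (output_risk_const_le 1) (output_risk_const_le (-1)).
rewrite output_risk_const_sym // expr1n mulr1 mule_natl mule2n.
set r := output_risk (const_output 0) in r_fin *.
have rr_fin : r + r \is a fin_num by rewrite fin_numD r_fin.
rewrite -[X in (_ <= X)%E]adde0 (leeD2lE _ _ rr_fin) pmule_rle0 ?lte_fin // => muD_le0.
by apply/eqP; rewrite eq_le muD_le0 measure_ge0.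
Qed.

End DeepNetwork.

End Risk.

Theorem corollary2p19 (R : realType) (L : nat) (l : nat -> nat) (dd : nat)
  (a b : R)
  (mu : {measure set ((l 0%N).-tuple R) -> \bar R})
  (f : (l 0%N).-tuple R -> (l L).-tuple R) :
  (0 < L)%N ->
  (forall k, (0 < l k)%N) ->
  dd = dk l L ->
  a < b ->
  (mu (box (l 0%N) a b) < +oo)%E ->
  measurable_fun (box (l 0%N) a b) f ->
  (forall theta : 'rV[R]_dd, (risk a b mu f theta < +oo)%E) ->
  ((L - 1)%:R * fine (mu (box (l 0%N) a b)) = 0 <->
   (forall (theta vartheta : 'rV[R]_dd) (lam : R), 0 <= lam <= 1 ->
      (risk a b mu f (lam *: theta + (1 - lam) *: vartheta)
       <= lam%:E * risk a b mu f theta + (1 - lam)%:E * risk a b mu f vartheta)%E)).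
Proof.
move=> L_gt0 l_gt0 -> _ muD_lt_oo mf risk_fin.
have muD_fin : mu (box (l 0%N) a b) \is a fin_num by rewrite ge0_fin_numE ?measure_ge0.
split.
- move=> /eqP; rewrite mulf_eq0 pnatr_eq0 subn_eq0 => /orP[L_le1|/eqP muD0].
    by move=> theta vartheta lam; apply: (risk_convex_depth1 mf); lia.
  have muD_eq0 : mu (box (l 0%N) a b) = 0 by rewrite -(fineK muD_fin) muD0.
  by move=> theta vartheta lam _; rewrite !(risk_null mf) // !mule0 adde0.
- move=> risk_convex; have [->|L_ge2] : L = 1%N \/ (2 <= L)%N by lia.
    by rewrite subnn mul0r.
  by rewrite (measure_box_eq0 mf l_gt0 L_ge2 risk_convex risk_fin) mulr0.
Qed.
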